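(* Let $G_{\mathit{di}}$ be a knowledge connectivity graph that is Byzantine-safe for $F$ and whose sink component (vertex set $V_{\mathit{sink}}$) contains at least $2f+1$ correct processes. Then participant detectors, the threshold $f$, and the sink detector are sufficient to solve consensus in Stellar: when every process defines its slices by the slice construction below (using $\mathit{PD}_i$, $f$, and the sink detector), the set $W$ of all correct processes forms a consensus cluster, and hence is the (unique) maximal consensus cluster.
   Context: Processes and faults: $\Pi$ is a finite set of processes, $f\ge0$ a known integer; $W\subseteq\Pi$ is the set of correct processes and $F=\Pi\setminus W$ the Byzantine faulty processes, $|F|\le f$. Faulty processes may declare arbitrary slices. Slices and quorums: each process $i$ has a set $\mathcal{S}_i$ of slices (subsets of $\Pi$). $Q\subseteq\Pi$ is a quorum if every $i\in Q$ has some $S\in\mathcal{S}_i$ with $S\subseteq Q$; a quorum of $i$ is a quorum containing $i$. A set $I\subseteq W$ is intertwined if $|Q\cap Q'|>f$ for all $i,j\in I$, every quorum $Q$ of $i$ and every quorum $Q'$ of $j$. A set $I\subseteq W$ is a consensus cluster if (Quorum Intersection) $I$ is intertwined and (Quorum Availability) every $i\in I$ has a quorum $Q$ with $Q\subseteq I$. A maximal consensus cluster is a consensus cluster not strictly contained in another consensus cluster. (Known criterion, from prior work: all correct processes can solve consensus with the Stellar consensus protocol under partial synchrony if there is exactly one maximal consensus cluster and it equals $W$.) Knowledge graph: each process $i$ is given $\mathit{PD}_i\subseteq\Pi$; $G_{\mathit{di}}$ is the directed graph on $\Pi$ with edge $(i,j)$ iff $j\in\mathit{PD}_i$. A sink component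 is a strongly connected component of $G_{\mathit{di}}$ from which no path leads outside it. A directed graph is $k$-OSR if (1) its underlying undirected graph is connected; (2) its condensation into strongly connected components has exactly one sink $G_{\mathit{sink}}$; (3) $G_{\mathit{sink}}$ is $k$-strongly connected (every ordered pair of its nodes joined by $k$ node-disjoint directed paths); (4) from every node outside $G_{\mathit{sink}}$ to every node in it there are at least $k$ node-disjoint directed paths. $G_{\mathit{di}}$ is Byzantine-safe for $F$ if $|F|\le f$ and the graph obtained from $G_{\mathit{di}}$ by deleting $F$ is $(f+1)$-OSR. $V_{\mathit{sink}}$ denotes the vertex set of the unique sink component of $G_{\mathit{di}}$. Sink detector: an oracle with operation $\mathtt{get\_sink}(\mathit{PD}_i,f)$ returning $\langle \mathit{true},V_{\mathit{sink}}\rangle$ to $i\in V_{\mathit{sink}}$ and $\langle\mathit{false},V_i\rangle$ to $i\notin V_{\mathit{sink}}$, where $V_i\subseteq V_{\mathit{sink}}$ contains at least $f+1$ correct members of $V_{\mathit{sink}}$. Slice construction: let $m=\lceil (|V_{\mathit{sink}}|+f+1)/2\rceil$. Every correct $i\in V_{\mathit{sink}}$ has $\mathcal{S}_i=\{S\subseteq V_{\mathit{sink}}: |S|=m\}$; every correct $i\notin V_{\mathit{sink}}$ has $\mathcal{S}_i=\{S\subseteq V_i: |S|=f+1\}$. *)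

From mathcomp Require Import all_boot.
Set Implicit Arguments. Unset Strict Implicit. Unset Printing Implicit Defensive.

Section Defs.
Variable Pi : finType.

(* Edge (i,j) iff j \in PD i. *)

(* A directed path from u to v inside the vertex set X: [p] lists the vertices
   after u, ending with v; it is a simple path (u :: p has no repetition). *)
Definition dpath_in (PD : Pi -> {set Pi}) (X : {set Pi}) (u v : Pi) (p : seq Pi) :=
  [/\ u \in X, all (fun w => w \in X) p,
      path (fun a b => b \in PD a) u p, last u p = v & (p != [::]) && uniq (u :: p)].

Definition interior (p : seq Pi) : seq Pi := take (size p).-1 p.

Definition k_disjoint_paths (PD : Pi -> {set Pi}) (X : {set Pi}) (k : nat) (u v : Pi) :=
  exists ps : seq (seq Pi),
    [/\ k <= size ps, uniq ps,
        (forall p, p \in ps -> dpath_in PD X u v p) &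
        (forall i j, i < size ps -> j < size ps -> i != j ->
           [disjoint interior (nth [::] ps i) & interior (nth [::] ps j)])].

Definition reach_in (PD : Pi -> {set Pi}) (X : {set Pi}) :=
  connect [rel a b | [&& a \in X, b \in X & b \in PD a]].

Definition ureach_in (PD : Pi -> {set Pi}) (X : {set Pi}) :=
  connect [rel a b | [&& a \in X, b \in X & (b \in PD a) || (a \in PD b)]].

(* Such a set
   is automatically a (maximal) strongly connected component. *)
Definition is_sink_comp (PD : Pi -> {set Pi}) (X C : {set Pi}) :=
  [/\ C != set0, C \subset X,
      (forall u v, u \in C -> v \in C -> reach_in PD C u v) &
      (forall u v, u \in C -> v \in X -> v \in PD u -> v \in C)].

Definition k_OSR (PD : Pi -> {set Pi}) (X : {set Pi}) (k : nat) :=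
  (forall u v, u \in X -> v \in X -> ureach_in PD X u v) /\
      exists Csink,
        [/\ is_sink_comp PD X Csink,
            (forall C, is_sink_comp PD X C -> C = Csink),
            (forall u v, u \in Csink -> v \in Csink -> u != v ->
               k_disjoint_paths PD Csink k u v) &
            (forall u v, u \in X -> u \notin Csink -> v \in Csink ->
               k_disjoint_paths PD X k u v)].

Definition byzantine_safe (PD : Pi -> {set Pi}) (f : nat) (F : {set Pi}) :=
  #|F| <= f /\ k_OSR PD (~: F) f.+1.

(* The oracle answer get_sink(PD_i, f) of process i is modelled by sd i. *)
Definition sink_detector_spec (f : nat) (W Vsink : {set Pi})
    (sd : Pi -> bool * {set Pi}) :=
  forall i,
    (i \in Vsink -> sd i = (true, Vsink)) /\
    (i \notin Vsink -> [/\ (sd i).1 = false, (sd i).2 \subset Vsink &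
                           f.+1 <= #|(sd i).2 :&: W|]).

Definition slice_threshold (f : nat) (V : {set Pi}) : nat := uphalf (#|V| + f.+1).

Definition slice_construction (f : nat) (ans : bool * {set Pi}) : {set {set Pi}} :=
  if ans.1 then [set S : {set Pi} | (S \subset ans.2) && (#|S| == slice_threshold f ans.2)]
  else [set S : {set Pi} | (S \subset ans.2) && (#|S| == f.+1)].

Definition is_quorum (slices : Pi -> {set {set Pi}}) (Q : {set Pi}) :=
  forall i, i \in Q -> exists2 S, S \in slices i & S \subset Q.

Definition intertwined (slices : Pi -> {set {set Pi}}) (f : nat) (W I : {set Pi}) :=
  I \subset W /\
  forall i j Q Q', i \in I -> j \in I ->
    is_quorum slices Q -> i \in Q -> is_quorum slices Q' -> j \in Q' ->
    f < #|Q :&: Q'|.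

Definition consensus_cluster (slices : Pi -> {set {set Pi}}) (f : nat) (W I : {set Pi}) :=
  intertwined slices f W I /\
  forall i, i \in I -> exists Q, [/\ is_quorum slices Q, i \in Q & Q \subset I].

Definition maximal_consensus_cluster (slices : Pi -> {set {set Pi}}) (f : nat)
    (W I : {set Pi}) :=
  consensus_cluster slices f W I /\
  forall J, consensus_cluster slices f W J -> I \subset J -> J = I.

End Defs.

From mathcomp Require Import all_boot.
From mathcomp Require Import zify.
Set Implicit Arguments. Unset Strict Implicit.

(* A quorum of a correct process contains a correct member of V_sink (itself,
   or one of the f+1 sink members of its slice, at most f of them faulty), hence
   a slice of it: m = ceil((|V_sink| + f + 1) / 2) elements of V_sink.  Two such
   subsets of V_sink share more than f elements.  As V_sink has at least 2f+1
   correct and at most f faulty members, m does not exceed the number of its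
   correct members, so every correct process has a slice of correct sink
   members, and W is quorum-available. *)

Lemma exists_subset_card (T : finType) (A : {set T}) k :
  k <= #|A| -> exists2 S : {set T}, S \subset A & #|S| = k.
Proof.
move=> le_kA; exists [set x in take k (enum A)].
  by apply/subsetP=> x; rewrite inE => /mem_take; rewrite mem_enum.
rewrite cardsE (card_uniqP _) ?take_uniq ?enum_uniq // size_take -cardE.
by case: ltngtP le_kA => // ->.
Qed.

Lemma uphalf_card_leq_cardI (T : finType) (V A B : {set T}) f :
  A \subset V -> B \subset V ->
  uphalf (#|V| + f.+1) <= #|A| -> uphalf (#|V| + f.+1) <= #|B| ->
  f < #|A :&: B|.
Proof.
move=> sAV sBV leA leB.
have leAB : #|A :|: B| <= #|V| by rewrite subset_leq_card // subUset sAV.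
have := cardsUI A B; have := odd_double_half (#|V| + f.+1).
rewrite uphalf_half in leA leB; lia.
Qed.

Lemma uphalf_leq_correct (T : finType) (V F : {set T}) f :
  #|F| <= f -> (f.*2).+1 <= #|V :&: ~: F| ->
  uphalf (#|V| + f.+1) <= #|V :&: ~: F|.
Proof.
move=> leFf le_correct.
have leVF : #|V :&: F| <= #|F| by rewrite subset_leq_card ?subsetIr.
have := cardsID F V; rewrite setDE uphalf_half.
have := odd_double_half (#|V| + f.+1); lia.
Qed.

Lemma consensus_cluster_maximal (T : finType) (slices : T -> {set {set T}}) f W :
  consensus_cluster slices f W W -> maximal_consensus_cluster slices f W W.
Proof.
split=> // J [[sJW _] _] sWJ.
by apply/eqP; rewrite eqEsubset sJW.
Qed.

Lemma maximal_consensus_cluster_eq (T : finType) (slices : T -> {set {set T}}) f W I :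
  consensus_cluster slices f W W -> maximal_consensus_cluster slices f W I -> I = W.
Proof. by move=> ccW [[[sIW _] _] maxI]; apply/esym/maxI. Qed.

Section SliceConstruction.

Variables (Pi : finType) (f : nat) (F Vsink : {set Pi}).
Variables (sd : Pi -> bool * {set Pi}) (slices : Pi -> {set {set Pi}}).
Hypothesis card_F : #|F| <= f.
Hypothesis sd_spec : sink_detector_spec f (~: F) Vsink sd.
Hypothesis slicesE : forall i, i \in ~: F -> slices i = slice_construction f (sd i).

Lemma sink_sliceP i (S : {set Pi}) : i \in ~: F -> i \in Vsink ->
  reflect (S \subset Vsink /\ #|S| = slice_threshold f Vsink) (S \in slices i).
Proof.
move=> iW iV; rewrite slicesE // /slice_construction (proj1 (sd_spec i) iV) inE.
by apply: (iffP andP) => -[-> /eqP].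
Qed.

Lemma outside_sliceP i (S : {set Pi}) : i \in ~: F -> i \notin Vsink ->
  reflect (S \subset (sd i).2 /\ #|S| = f.+1) (S \in slices i).
Proof.
move=> iW iV; have [sd_false _ _] := proj2 (sd_spec i) iV.
rewrite slicesE // /slice_construction sd_false inE.
by apply: (iffP andP) => -[-> /eqP].
Qed.

Lemma quorum_meets_correct_sink Q i : is_quorum slices Q -> i \in Q -> i \in ~: F ->
  exists j, [/\ j \in Q, j \in ~: F & j \in Vsink].
Proof.
move=> qQ iQ iW; have [iV | iNV] := boolP (i \in Vsink); first by exists i.
have [S /(outside_sliceP _ iW iNV)[sSsd cardS] sSQ] := qQ i iQ.
have [_ ssdV _] := proj2 (sd_spec i) iNV.
have [sSF | /subsetPn[j jS jNF]] := boolP (S \subset F).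
  by have := subset_leq_card sSF; rewrite cardS; lia.
exists j; split; first exact: subsetP sSQ j jS.
  by rewrite inE.
exact: subsetP (subset_trans sSsd ssdV) j jS.
Qed.

Lemma quorum_card_sink Q i : is_quorum slices Q -> i \in Q -> i \in ~: F ->
  slice_threshold f Vsink <= #|Q :&: Vsink|.
Proof.
move=> qQ iQ iW; have [j [jQ jW jV]] := quorum_meets_correct_sink qQ iQ iW.
have [S /(sink_sliceP _ jW jV)[sSV <-] sSQ] := qQ j jQ.
by rewrite subset_leq_card // subsetI sSQ.
Qed.

Lemma correct_quorum_intersection : intertwined slices f (~: F) (~: F).
Proof.
split=> // i j Q Q' iW jW qQ iQ qQ' jQ'.
have := uphalf_card_leq_cardI (subsetIr Q Vsink) (subsetIr Q' Vsink)
  (quorum_card_sink qQ iQ iW) (quorum_card_sink qQ' jQ' jW).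
move/leq_trans; apply; apply: subset_leq_card.
by rewrite setIACA setIid subsetIl.
Qed.

Hypothesis many_correct_in_sink : (f.*2).+1 <= #|Vsink :&: ~: F|.

Lemma correct_slice_in_correct_sink i : i \in ~: F ->
  exists2 S, S \in slices i & S \subset Vsink :&: ~: F.
Proof.
move=> iW; have [iV | iNV] := boolP (i \in Vsink).
  have /exists_subset_card[S sSVW cardS] :=
    uphalf_leq_correct card_F many_correct_in_sink.
  exists S => //; apply/(sink_sliceP _ iW iV); split=> //.
  exact: subset_trans sSVW (subsetIl _ _).
have [_ ssdV /exists_subset_card[S sSsdW cardS]] := proj2 (sd_spec i) iNV.
have sSsd := subset_trans sSsdW (subsetIl _ _).
exists S; first exact/(outside_sliceP _ iW iNV).
by rewrite subsetI (subset_trans sSsd ssdV) (subset_trans sSsdW (subsetIr _ _)).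
Qed.

Lemma correct_quorum_availability i : i \in ~: F ->
  exists Q, [/\ is_quorum slices Q, i \in Q & Q \subset ~: F].
Proof.
move=> iW; have sQW : i |: (Vsink :&: ~: F) \subset ~: F.
  by rewrite subUset sub1set iW subsetIr.
exists (i |: (Vsink :&: ~: F)); split=> //; last exact: setU11.
move=> j /(subsetP sQW)/correct_slice_in_correct_sink[S Sj sSVW].
by exists S; rewrite // (subset_trans sSVW) ?subsetUr.
Qed.

Lemma correct_consensus_cluster : consensus_cluster slices f (~: F) (~: F).
Proof.
split; [exact: correct_quorum_intersection | exact: correct_quorum_availability].
Qed.

End SliceConstruction.

Theorem theorem5 (Pi : finType) (f : nat) (F : {set Pi})
    (PD : Pi -> {set Pi}) (Vsink : {set Pi})
    (sd : Pi -> bool * {set Pi}) (slices : Pi -> {set {set Pi}}) :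
  (* G_di is Byzantine-safe for F *)
  byzantine_safe PD f F ->
  (* Vsink is the vertex set of the unique sink component of G_di *)
  is_sink_comp PD setT Vsink ->
  (forall C, is_sink_comp PD setT C -> C = Vsink) ->
  (* the sink component contains at least 2f+1 correct processes *)
  (f.*2).+1 <= #|Vsink :&: ~: F| ->
  (* sd is the answer of the sink detector *)
  sink_detector_spec f (~: F) Vsink sd ->
  (* every correct process builds its slices by the construction *)
  (forall i, i \in ~: F -> slices i = slice_construction f (sd i)) ->
  consensus_cluster slices f (~: F) (~: F) /\
  maximal_consensus_cluster slices f (~: F) (~: F) /\
  (forall I, maximal_consensus_cluster slices f (~: F) I -> I = ~: F).
Proof.
(* The graph hypotheses only matter through the guarantees of the sink
   detector, which [sink_detector_spec] already states. *)
move=> [card_F _] _ _ many_correct sd_spec slicesE.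
have ccW := correct_consensus_cluster card_F sd_spec slicesE many_correct.
split; [exact: ccW | split; [exact: consensus_cluster_maximal |]].
by move=> I; apply: maximal_consensus_cluster_eq.
Qed.
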